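(* Let $\mathbb{K}$ be a non-Archimedean valued field with residue field $\mathfrak{r}$ such that $\chi(\mathbb{K}) = \chi(\mathfrak{r})$. Then for every topological group $G$ and every $n \geq 1$, the comparison map $c^n : H^n_{cb}(G, \mathbb{K}) \to H^n_c(G, \mathbb{K})$ is injective.
   Context: A non-Archimedean valued field is a field with an absolute value satisfying the ultrametric inequality; $\mathfrak{o}=\{|x|_\mathbb{K}\le1\}$, $\mathfrak{m}=\{|x|_\mathbb{K}<1\}$, $\mathfrak{r}=\mathfrak{o}/\mathfrak{m}$, $\chi$ = characteristic. $\mathbb{K}$ is a trivial $G$-module. Bar resolution: $\overline{C}^0=\mathbb{K}$, for $n\ge1$ $\overline{C}^n(G,\mathbb{K})$ = continuous maps $G^n\to\mathbb{K}$ and $\overline{C}^n_b(G,\mathbb{K})$ = bounded continuous ones, coboundary $\delta^nf(g_1,\dots,g_{n+1})=f(g_2,\dots,g_{n+1})+\sum_{i=1}^n(-1)^if(g_1,\dots,g_ig_{i+1},\dots,g_{n+1})+(-1)^{n+1}f(g_1,\dots,g_n)$. $H^\bullet_c$ and $H^\bullet_{cb}$ are the cohomologies of these complexes, and the comparison map is induced by inclusion. *)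

From mathcomp Require Import all_boot all_order all_algebra.
From mathcomp Require Import all_classical all_reals all_analysis.
Set Implicit Arguments. Unset Strict Implicit. Unset Printing Implicit Defensive.
Import Order.TTheory GRing.Theory Num.Theory.
Local Open Scope ring_scope.

Definition nonarch_abs (R : realType) (K : fieldType) (abs : K -> R) : Prop :=
  [/\ (forall x, 0 <= abs x),
      (forall x, abs x = 0 <-> x = 0),
      (forall x y, abs (x * y) = abs x * abs y) &
      (forall x y, abs (x + y) <= Num.max (abs x) (abs y))].

(* Characteristic of the residue field r = o / m, o = {|x| <= 1},
   m = {|x| < 1}: a prime p is the characteristic of r iff p%:R = 0 in r,
   i.e. iff the image of p in o (p * 1_K, which lies in o) lies in m. *)
Definition residue_pchar (R : realType) (K : fieldType) (abs : K -> R) :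
  pred nat := fun p => prime p && (abs (p%:R : K) < 1).

Definition is_topological_group (G : topologicalType)
  (mul : G -> G -> G) (one : G) (inv : G -> G) : Prop :=
  [/\ (forall x y z, mul x (mul y z) = mul (mul x y) z),
      (forall x, mul one x = x /\ mul x one = x),
      (forall x, mul (inv x) x = one /\ mul x (inv x) = one),
      continuous (fun p : G * G => mul p.1 p.2) &
      continuous inv].

Section Cochains.
Variables (R : realType) (K : fieldType) (abs : K -> R).
Variables (G : topologicalType) (mul : G -> G -> G).

Definition abs_continuous (X : topologicalType) (f : X -> K) : Prop :=
  forall x (e : R), 0 < e -> \forall y \near x, abs (f y - f x) < e.

Definition abs_bounded (X : Type) (f : X -> K) : Prop :=
  exists M : R, forall x, abs (f x) <= M.

(* n-cochains: maps G^n -> K; for n = 0 these are the constants, i.e. K *)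
Definition cochain (n : nat) := {ptws 'I_n -> G} -> K.

Definition cont_cochain n (f : cochain n) := abs_continuous f.
Definition bcont_cochain n (f : cochain n) := abs_continuous f /\ abs_bounded f.

(* (g_1,...,g_{n+1}) |-> (g_1,...,g_k g_{k+1},...,g_{n+1}) (0-indexed k) *)
Definition merge_face n (k : 'I_n) (g : 'I_n.+1 -> G) : 'I_n -> G :=
  fun i => if (i < k)%N then g (widen_ord (leqnSn n) i)
           else if i == k then mul (g (widen_ord (leqnSn n) i)) (g (lift ord0 i))
           else g (lift ord0 i).

Definition coboundary n (f : cochain n) : cochain n.+1 :=
  fun g => f (fun i => g (lift ord0 i))
         + \sum_(k < n) (-1) ^+ k.+1 * f (merge_face k g)
         + (-1) ^+ n.+1 * f (fun i => g (widen_ord (leqnSn n) i)).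

(* Injectivity of c^n : H^n_cb(G,K) -> H^n_c(G,K) for n >= 1, unfolded:
   a bounded continuous n-cocycle which is the coboundary of a continuous
   (n-1)-cochain is the coboundary of a bounded continuous (n-1)-cochain.
   Here the degree n >= 1 is written m.+1. *)
Definition comparison_injective (m : nat) : Prop :=
  forall f : cochain m.+1,
    bcont_cochain f -> coboundary f = (fun _ => 0) ->
    (exists g : cochain m, cont_cochain g /\ f = coboundary g) ->
    exists h : cochain m, bcont_cochain h /\ f = coboundary h.

End Cochains.

From HB Require Import structures.
From mathcomp Require Import all_boot all_order all_algebra.
From mathcomp Require Import all_classical all_reals all_analysis.
From mathcomp Require Import ring.
Set Implicit Arguments.
Unset Strict Implicit.
Unset Printing Implicit Defensive.
Import Order.TTheory GRing.Theory Num.Theory.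
Local Open Scope ring_scope.

(* Since K and its residue field have the same characteristic, every element
   of the prime subfield P of K has absolute value at most 1, so by the
   ultrametric inequality every ball B = {|x| <= M} is a P-vector subspace of
   K. Projecting along a P-complement of B gives an additive retraction
   r : K -> B, and r is the identity near 0 once M >= 1. Given a bounded
   coboundary f = dg of a continuous g, take M >= sup |f|: then r o g is
   bounded, continuous, and d(r o g) = r o dg = f, since the coboundary has
   coefficients +-1. *)

Section PrimeSubfield.
Variable K : fieldType.

(* The image of Q in characteristic 0, of F_p in characteristic p. *)
Definition prime_subfield : set K :=
  [set c | exists a b : int, (b%:~R : K) != 0 /\ c = a%:~R / b%:~R].

Lemma prime_subfield_int (k : int) : prime_subfield k%:~R.
Proof. by exists k, 1; rewrite oner_eq0 divr1. Qed.

Lemma prime_subfield1 : prime_subfield 1.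
Proof. exact: prime_subfield_int 1. Qed.

Lemma prime_subfieldB a c :
  prime_subfield a -> prime_subfield c -> prime_subfield (a - c).
Proof.
move=> [a1 [a2 [a2_neq0 ->]]] [c1 [c2 [c2_neq0 ->]]].
exists (a1 * c2 - c1 * a2), (a2 * c2); rewrite !rmorphM /= mulf_neq0 //.
by split=> //; rewrite rmorphB !rmorphM /=; field; rewrite a2_neq0 c2_neq0.
Qed.

Lemma prime_subfieldM a c :
  prime_subfield a -> prime_subfield c -> prime_subfield (a * c).
Proof.
move=> [a1 [a2 [a2_neq0 ->]]] [c1 [c2 [c2_neq0 ->]]].
exists (a1 * c1), (a2 * c2); rewrite !rmorphM /= mulf_neq0 //.
by split=> //; field; rewrite a2_neq0 c2_neq0.
Qed.

Lemma prime_subfieldV a : prime_subfield a -> prime_subfield a^-1.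
Proof.
move=> [a1 [a2 [a2_neq0 ->]]]; have [a1_eq0 | a1_neq0] := eqVneq (a1%:~R : K) 0.
  by rewrite a1_eq0 mul0r invr0; exact: prime_subfield_int 0.
by exists a2, a1; split=> //; rewrite invf_div.
Qed.

End PrimeSubfield.

Arguments prime_subfield : clear implicits.

Local Open Scope classical_set_scope.

Lemma bigcup_chain2 (T : Type) (F : set (set T)) (u v : T) :
  total_on F subset -> (\bigcup_(X in F) X) u -> (\bigcup_(X in F) X) v ->
  exists2 X, F X & X u /\ X v.
Proof.
move=> chainF [X FX Xu] [Y FY Yv].
case: (chainF X Y FX FY) => [XY | YX].
  by exists Y => //; split=> //; exact: XY.
by exists X => //; split=> //; exact: YX.
Qed.

Section AdditiveRetraction.
Variables (F : fieldType) (S : set F) (V : lmodType F).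
Hypotheses (S1 : S 1) (SB : forall a c, S a -> S c -> S (a - c)).
Hypotheses (SM : forall a c, S a -> S c -> S (a * c)) (SV : forall a, S a -> S a^-1).

Let S0 : S 0. Proof. by rewrite -(subrr 1); exact: SB. Qed.
Let SN a : S a -> S (- a). Proof. by rewrite -sub0r; exact: SB. Qed.
Let SD a c : S a -> S c -> S (a + c).
Proof. by move=> Sa Sc; rewrite -[c]opprK; apply/SB/SN. Qed.

Definition Sclosed (W : set V) : Prop :=
  (forall u v, W u -> W v -> W (u + v)) /\
  (forall c v, S c -> W v -> W (c *: v)).

Lemma SclosedB W u v : Sclosed W -> W u -> W v -> W (u - v).
Proof.
by move=> [WD WZ] Wu Wv; rewrite -scaleN1r; apply/WD/WZ => //; exact: SN.
Qed.

Lemma Sclosed_setU0 W : Sclosed W -> Sclosed (W `|` [set 0]).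
Proof.
move=> [WD WZ]; split.
  move=> u v [Wu | ->] [Wv | ->]; rewrite ?add0r ?addr0; try by left.
    by left; exact: WD.
  by right.
by move=> c v Sc [Wv | ->]; [left; exact: WZ | right; rewrite scaler0].
Qed.

Variable B : set V.
Hypotheses (B0 : B 0) (B_closed : Sclosed B).

Definition partial_complement (W : set V) : Prop :=
  Sclosed W /\ W `&` B `<=` [set 0].

Lemma partial_complement_bigcup (C : set (set V)) :
  C `<=` partial_complement -> total_on C subset ->
  partial_complement (\bigcup_(X in C) X).
Proof.
move=> Cpc chainC; split; first split.
- move=> u v Uu Uv; have [X CX [Xu Xv]] := bigcup_chain2 chainC Uu Uv.
  by exists X => //; have [[XD _] _] := Cpc X CX; exact: XD.
- move=> c v Sc [X CX Xv]; exists X => //.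
  by have [[_ XZ] _] := Cpc X CX; exact: XZ.
- by move=> v [[X CX Xv] Bv]; have [_ XB] := Cpc X CX; exact: XB.
Qed.

(* If w + c x lies in B with c <> 0, then x = c^-1 (b - w) lies in W + B. *)
Lemma partial_complement_adjoin W x :
  partial_complement W -> ~ (exists2 b, B b & (W `|` [set 0]) (x - b)) ->
  partial_complement [set w + c *: x | w in W `|` [set 0] & c in S].
Proof.
move=> [WS WB] xWB; have [W0D W0Z] := Sclosed_setU0 WS.
split; first split.
- move=> _ _ [w Ww [c Sc <-]] [w' Ww' [c' Sc' <-]].
  exists (w + w'); first exact: W0D.
  by exists (c + c'); [exact: SD | rewrite scalerDl addrACA].
- move=> d _ Sd [w Ww [c Sc <-]].
  by exists (d *: w); [exact: W0Z | exists (d * c); [exact: SM | rewrite scalerDr scalerA]].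
move=> _ [[w Ww [c Sc <-]]]; have [-> | c_neq0] := eqVneq c 0.
  by rewrite scale0r addr0; case: Ww => [Ww Bw | ->] //; apply: WB.
move=> Bwcx; exfalso; apply: xWB; exists (c^-1 *: (w + c *: x)).
  by apply: (proj2 B_closed) Bwcx; exact: SV.
have -> : x - c^-1 *: (w + c *: x) = - c^-1 *: w.
  by rewrite scalerDr scalerA mulVf // scale1r opprD addrCA subrr addr0 scaleNr.
by apply: W0Z Ww; apply/SN/SV.
Qed.

Lemma exists_complement : exists W : set V,
  [/\ W 0, Sclosed W, W `&` B `<=` [set 0] & forall v, exists2 b, B b & W (v - b)].
Proof.
have [A [[AS AB] Amax]] := Zorn_bigcup partial_complement_bigcup.
exists (A `|` [set 0]); split; [by right | exact: Sclosed_setU0 |  |].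
  by move=> v [[Av | ->] Bv] //; exact: AB.
move=> x; apply: contrapT => xAB.
have [W'S W'B] := partial_complement_adjoin (conj AS AB) xAB.
apply: (Amax _ _ (conj W'S W'B)); split.
  by move=> w Aw; exists w; [left | exists 0; rewrite ?scale0r ?addr0].
move=> /(_ x) Ax; apply: xAB; exists 0 => //; rewrite subr0; left; apply: Ax.
by exists 0; [right | exists 1; rewrite ?scale1r ?add0r].
Qed.

Lemma exists_additive_retraction : exists r : {additive V -> V},
  (forall v, B (r v)) /\ (forall b, B b -> r b = b).
Proof.
have [W [W0 WS WB Wdecomp]] := exists_complement.
pose r v := projT1 (cid2 (Wdecomp v)).
have rB v : B (r v) by rewrite /r; case: cid2.
have rW v : W (v - r v) by rewrite /r; case: cid2.
have r_unique v b : B b -> W (v - b) -> r v = b.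
  move=> Bb Wvb; apply/eqP; rewrite -subr_eq0; apply/eqP/WB; split.
    have -> : r v - b = (v - b) - (v - r v) by rewrite [RHS]addrC opprB addrA subrK.
    exact: SclosedB.
  exact: SclosedB.
have r_morph : zmod_morphism r.
  move=> u v; apply: r_unique; first exact: SclosedB.
  have -> : u - v - (r u - r v) = (u - r u) - (v - r v).
    by rewrite !opprB addrACA [RHS]addrACA [- r u + _]addrC.
  exact: SclosedB.
exists (HB.pack_for {additive V -> V} r (GRing.isZmodMorphism.Build V V r r_morph)).
by split=> // b Bb; apply: r_unique; rewrite // subrr.
Qed.

End AdditiveRetraction.

Local Close Scope classical_set_scope.

Lemma coboundary_additive_comp (K : fieldType) (G : topologicalType)
    (mul : G -> G -> G) (n : nat) (r : {additive K -> K}) (f : cochain K G n) :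
  coboundary mul (r \o f) = r \o coboundary mul f.
Proof.
apply: funext => g; rewrite /coboundary /= !raddfD raddf_sum raddfMsign.
by congr (_ + _ + _); apply: eq_bigr => k _; rewrite raddfMsign.
Qed.

Lemma abs_continuous_additive_comp (R : realType) (K : fieldType) (abs : K -> R)
    (X : topologicalType) (r : {additive K -> K}) (d : R) (f : X -> K) :
  0 < d -> (forall a, abs a < d -> r a = a) ->
  abs_continuous abs f -> abs_continuous abs (r \o f).
Proof.
move=> d_gt0 r_id f_cont x e e_gt0.
have ed_gt0 : 0 < Num.min e d by rewrite lt_min e_gt0 d_gt0.
apply: filterS (f_cont x _ ed_gt0) => y; rewrite lt_min => /andP[fxy_e fxy_d] /=.
by rewrite -raddfB r_id.
Qed.

Section NonArchimedean.
Variables (R : realType) (K : fieldType) (abs : K -> R).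
Hypothesis habs : nonarch_abs abs.

Lemma abs_ge0 x : 0 <= abs x. Proof. by case: habs. Qed.
Lemma abs_eq0 x : abs x = 0 <-> x = 0. Proof. by case: habs. Qed.
Lemma absM x y : abs (x * y) = abs x * abs y. Proof. by case: habs. Qed.

Lemma abs_add_le x y M : abs x <= M -> abs y <= M -> abs (x + y) <= M.
Proof.
case: habs => _ _ _ abs_ultra xM yM.
by apply: le_trans (abs_ultra x y) _; rewrite ge_max xM yM.
Qed.

Lemma abs0 : abs 0 = 0. Proof. exact/abs_eq0. Qed.

Lemma abs1 : abs 1 = 1.
Proof.
have abs1_neq0 : abs 1 != 0 by apply/eqP => /abs_eq0/eqP; rewrite oner_eq0.
by apply: (mulIf abs1_neq0); rewrite mul1r -absM mulr1.
Qed.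

Lemma absN x : abs (- x) = abs x.
Proof.
have absN1 : abs (-1) = 1.
  by apply/eqP; rewrite -(sqrp_eq1 (abs_ge0 _)) expr2 -absM mulrNN mulr1 abs1.
by rewrite -mulN1r absM absN1 mul1r.
Qed.

Lemma abs_natr_le1 m : abs (m%:R : K) <= 1.
Proof.
elim: m => [|m IHm]; first by rewrite abs0 ler01.
by rewrite mulrSr; apply: abs_add_le; rewrite ?abs1.
Qed.

Lemma abs_intr_le1 (k : int) : abs (k%:~R : K) <= 1.
Proof. by case: k => n; rewrite ?NegzE ?mulrNz ?absN -pmulrn abs_natr_le1. Qed.

Lemma absV x : abs x^-1 = (abs x)^-1.
Proof.
have [-> | x_neq0] := eqVneq x 0; first by rewrite invr0 abs0 invr0.
have absx_neq0 : abs x != 0 by apply/eqP => /abs_eq0/eqP; rewrite (negPf x_neq0).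
by apply: (mulfI absx_neq0); rewrite -absM !divff ?abs1.
Qed.

Hypothesis hchar : forall p : nat, (p \in [pchar K]%R) = residue_pchar abs p.

Lemma abs_prime_ge1 p : prime p -> (p%:R : K) != 0 -> 1 <= abs (p%:R : K).
Proof.
move=> p_prime p_neq0; rewrite leNgt; apply/negP => abs_lt1.
have : p \in [pchar K]%R by rewrite hchar /residue_pchar p_prime abs_lt1.
by rewrite inE (negPf p_neq0) andbF.
Qed.

Lemma abs_natr_ge1 m : (m%:R : K) != 0 -> 1 <= abs (m%:R : K).
Proof.
elim/ltn_ind: m => -[|[|m]] IHm m_neq0; first by rewrite eqxx in m_neq0.
  by rewrite abs1.
have p_prime := pdiv_prime (isT : (1 < m.+2)%N).
have m_eq : m.+2 = (m.+2 %/ pdiv m.+2 * pdiv m.+2)%N by rewrite divnK ?pdiv_dvd.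
move: m_neq0; rewrite m_eq natrM mulf_eq0 negb_or => /andP[q_neq0 p_neq0].
rewrite absM -[1]mulr1; apply: ler_pM => //; last exact: abs_prime_ge1.
apply: IHm q_neq0; rewrite ltn_divLR ?prime_gt0 // ltn_Pmulr ?prime_gt1 //.
Qed.

Lemma abs_intr_ge1 (k : int) : (k%:~R : K) != 0 -> 1 <= abs (k%:~R : K).
Proof.
by case: k => n; rewrite ?NegzE ?mulrNz ?oppr_eq0 ?absN -pmulrn; exact: abs_natr_ge1.
Qed.

Lemma abs_prime_subfield_le1 c : prime_subfield K c -> abs c <= 1.
Proof.
move=> [a [b [b_neq0 ->]]].
have absb_ge1 : 1 <= abs (b%:~R : K) by exact: abs_intr_ge1.
rewrite absM absV mulr_ile1 ?abs_ge0 ?invr_ge0 ?abs_ge0 ?abs_intr_le1 //.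
by rewrite invf_le1 // (lt_le_trans ltr01).
Qed.

Lemma abs_ball_Sclosed M : Sclosed (prime_subfield K) [set a : K^o | abs a <= M].
Proof.
split=> [u v | c v Sc]; first exact: abs_add_le.
rewrite /= => vM; apply: le_trans vM; rewrite absM ler_piMl ?abs_ge0 //.
exact: abs_prime_subfield_le1.
Qed.

End NonArchimedean.

Theorem theorem9p41 (R : realType) (K : fieldType) (abs : K -> R)
  (habs : nonarch_abs abs)
  (hchar : forall p : nat, (p \in [pchar K]%R) = residue_pchar abs p)
  (G : topologicalType) (mul : G -> G -> G) (one : G) (inv : G -> G)
  (hG : is_topological_group mul one inv) (n : nat) (hn : (1 <= n)%N) :
  comparison_injective abs mul n.-1.
Proof.
move=> f [_ [M0 fM0]] _ [g [g_cont f_eq]]; subst f.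
pose M := Num.max M0 1.
have M_ge1 : 1 <= M by rewrite le_max lexx orbT.
have M0_le : M0 <= M by rewrite le_max lexx.
have ball0 : abs 0 <= M by rewrite (abs0 habs) (le_trans ler01).
have [r [rB r_id]] := exists_additive_retraction (@prime_subfield1 K)
  (@prime_subfieldB K) (@prime_subfieldM K) (@prime_subfieldV K)
  ball0 (abs_ball_Sclosed habs hchar M).
exists (r \o g); split; first split.
- apply: abs_continuous_additive_comp ltr01 _ g_cont => a /ltW a_le1.
  exact/r_id/(le_trans a_le1).
- by exists M => x; exact: rB.
- rewrite coboundary_additive_comp; apply: funext => x /=.
  exact/esym/r_id/(le_trans (fM0 x)).
Qed.
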